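(* Let $(\alpha_0,\beta_0)\in U$ with $K(\alpha_0,\beta_0)\in\mathfrak M_\infty$, and let $(\alpha_n,\beta_n)\in U$ with $(\alpha_n,\beta_n)\to(\alpha_0,\beta_0)$, $\mathcal P_n=\{[0,\alpha_n],[\alpha_n,1]\}$ for $n=0,1,\dots$. Then for every $m\ge1$ there is $\delta_m>0$ such that for every $n$ every interval of $\mathcal P_n^{(m)}=\bigvee_{j=0}^{m-1}T^{-j}_{\alpha_n,\beta_n}(\mathcal P_n)$ has Lebesgue measure at least $\delta_m$.
   Context: For $0<\alpha<1$ and $0\le\beta\le1$ the skew tent map is $T_{\alpha,\beta}(x)=\frac{\beta}{\alpha}x$ for $0\le x\le\alpha$ and $T_{\alpha,\beta}(x)=\frac{\beta}{1-\alpha}(1-x)$ for $\alpha<x\le1$. $U=\{(\alpha,\beta): \tfrac12<\beta\le1,\ 1-\beta<\alpha<\beta\}$. The kneading sequence $K(\alpha,\beta)$ is built from the symbols $\mathfrak m_n=L,C,R$ according as $T^n_{\alpha,\beta}(\alpha)<\alpha$, $=\alpha$, $>\alpha$, truncated at the first $C$ if there is one; $\mathfrak M_\infty$ is the set of kneading sequences containing no $C$, i.e. those with $T^k_{\alpha,\beta}(\alpha)\ne\alpha$ for all $k\ge1$. The partition $\mathcal P_n^{(m)}$ consists of the nondegenerate closed intervals into which $[0,1]$ is cut by the points $0,1$ and all points of $T^{-j}_{\alpha_n,\beta_n}(\alpha_n)$, $0\le j\le m-1$. *)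

From Stdlib Require Import Reals Lra.
Open Scope R_scope.

Definition skew_tent (a b x : R) : R :=
  if Rle_dec x a then (b / a) * x else (b / (1 - a)) * (1 - x).

Fixpoint Titer (a b : R) (n : nat) (x : R) : R :=
  match n with
  | O => x
  | S k => skew_tent a b (Titer a b k x)
  end.

Definition inU (a b : R) : Prop :=
  1/2 < b <= 1 /\ 1 - b < a < b.

(* K(a,b) belongs to M_infinity: the kneading sequence contains no C,
   i.e. T^k(a) <> a for all k >= 1. *)
Definition kneading_in_Minf (a b : R) : Prop :=
  forall k : nat, (1 <= k)%nat -> Titer a b k a <> a.

(* Cut points of the partition P^(m) for parameters (a,b):
   0, 1 and all points of T^{-j}(a) in [0,1], 0 <= j <= m-1. *)
Definition cut_point (a b : R) (m : nat) (x : R) : Prop :=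
  x = 0 \/ x = 1 \/
  (0 <= x <= 1 /\ exists j : nat, (j < m)%nat /\ Titer a b j x = a).

Definition partition_interval (a b : R) (m : nat) (x y : R) : Prop :=
  x < y /\ cut_point a b m x /\ cut_point a b m y /\
  (forall z, x < z < y -> ~ cut_point a b m z).

(* The endpoints of an interval of P^(m) are 0, 1 or preimages of the critical
   point a of order < m.  Some iterate T^j, j <= m, maps them to two distinct
   points among 0, 1, a and the returns T^k(a), k < m (distinct, since equal
   iterates would force a cut point inside the interval), so their images are
   at least the "critical gap" c apart: the least distance from a to 0, 1 and
   to those returns T^k(a) <> a.  As T is Lipschitz with constant
   L = 1/a + 1/(1-a), every interval has length at least c / L^m.  When
   K(alpha_0, beta_0) is in M_infinity, the returns T^k(a), 0 < k < m, depend
   continuously on the parameters and stay away from a, so c and L are uniform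
   for all but finitely many n. *)

From Stdlib Require Import Reals Lra Lia.
Open Scope R_scope.

Definition eventually (P : nat -> Prop) : Prop :=
  exists N, forall n, (N <= n)%nat -> P n.

Lemma eventually_and (P Q : nat -> Prop) :
  eventually P -> eventually Q -> eventually (fun n => P n /\ Q n).
Proof.
  intros [N HP] [N' HQ]. exists (N + N')%nat.
  intros n Hn. split; [apply HP | apply HQ]; lia.
Qed.

Lemma eventually_forall_lt (P : nat -> nat -> Prop) (m : nat) :
  (forall k, (k < m)%nat -> eventually (P k)) ->
  eventually (fun n => forall k, (k < m)%nat -> P k n).
Proof.
  induction m as [|m IH]; intros H.
  - exists 0%nat. intros n _ k Hk. lia.
  - destruct (eventually_and _ _ (IH (fun k Hk => H k ltac:(lia))) (H m ltac:(lia)))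
      as [N HN].
    exists N. intros n Hn k Hk. destruct (HN n Hn) as [Hlt Hm].
    destruct (Nat.eq_dec k m) as [->|Hne]; [exact Hm | apply Hlt; lia].
Qed.

Lemma Un_cv_eventually_gt (u : nat -> R) (l c : R) :
  Un_cv u l -> c < l -> eventually (fun n => c < u n).
Proof.
  intros Hu Hc. destruct (Hu (l - c)) as [N HN]; [lra|].
  exists N. intros n Hn. specialize (HN n Hn). unfold R_dist in HN.
  apply Rabs_def2 in HN. lra.
Qed.

Lemma Un_cv_eventually_lt (u : nat -> R) (l c : R) :
  Un_cv u l -> l < c -> eventually (fun n => u n < c).
Proof.
  intros Hu Hc. destruct (Hu (c - l)) as [N HN]; [lra|].
  exists N. intros n Hn. specialize (HN n Hn). unfold R_dist in HN.
  apply Rabs_def2 in HN. lra.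
Qed.

Lemma Un_cv_const (c : R) : Un_cv (fun _ => c) c.
Proof.
  intros eps Heps. exists 0%nat. intros n _.
  unfold R_dist. rewrite Rminus_diag, Rabs_R0. exact Heps.
Qed.

Lemma Un_cv_inv (u : nat -> R) (l : R) :
  l <> 0 -> Un_cv u l -> Un_cv (fun n => / u n) (/ l).
Proof.
  intros Hl Hu. apply (continuity_seq Rinv); [|exact Hu].
  apply (continuity_pt_inv id); [apply derivable_continuous_pt, derivable_pt_id | exact Hl].
Qed.

Lemma Rabs_Rmin_sub_le (A B C D : R) :
  Rabs (Rmin A B - Rmin C D) <= Rmax (Rabs (A - C)) (Rabs (B - D)).
Proof.
  pose proof (Rmax_l (Rabs (A - C)) (Rabs (B - D))).
  pose proof (Rmax_r (Rabs (A - C)) (Rabs (B - D))).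
  revert H H0. generalize (Rmax (Rabs (A - C)) (Rabs (B - D))). intros M HAC HBD.
  unfold Rmin; repeat destruct Rle_dec; unfold Rabs in *; repeat destruct Rcase_abs; lra.
Qed.

Lemma Un_cv_Rmin (u v : nat -> R) (l l' : R) :
  Un_cv u l -> Un_cv v l' -> Un_cv (fun n => Rmin (u n) (v n)) (Rmin l l').
Proof.
  intros Hu Hv eps Heps.
  destruct (Hu eps Heps) as [N HN]. destruct (Hv eps Heps) as [N' HN'].
  exists (N + N')%nat. intros n Hn. unfold R_dist in *.
  eapply Rle_lt_trans; [apply Rabs_Rmin_sub_le|].
  apply Rmax_lub_lt; [apply HN | apply HN']; lia.
Qed.

Lemma lipschitz_continuity (f : R -> R) (K : R) :
  0 < K -> (forall u v, Rabs (f u - f v) <= K * Rabs (u - v)) -> continuity f.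
Proof.
  intros HK Hf x eps Heps. exists (eps / K). split; [apply Rdiv_lt_0_compat; lra|].
  intros y [_ Hy]. simpl in *. unfold R_dist in *.
  eapply Rle_lt_trans; [apply Hf|].
  apply (Rmult_lt_compat_l K) in Hy; [|exact HK].
  replace (K * (eps / K)) with eps in Hy by (field; lra). exact Hy.
Qed.

Lemma Titer_add (a b : R) (k i : nat) (x : R) :
  Titer a b (k + i) x = Titer a b k (Titer a b i x).
Proof. induction k as [|k IH]; simpl; [reflexivity | now rewrite IH]. Qed.

Definition tent_lip (a : R) : R := / a + / (1 - a).

Definition critical_gap (a b : R) (m : nat) (c : R) : Prop :=
  c <= a /\ c <= 1 - a /\
  forall k, (k < m)%nat -> Titer a b k a <> a -> c <= Rabs (Titer a b k a - a).

Definition partition_lower_bound (a b : R) (m : nat) (d : R) : Prop :=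
  forall x y, partition_interval a b m x y -> d <= y - x.

Lemma partition_lower_bound_le (a b : R) (m : nat) (d d' : R) :
  d' <= d -> partition_lower_bound a b m d -> partition_lower_bound a b m d'.
Proof. intros Hd H x y Hxy. specialize (H x y Hxy). lra. Qed.

Lemma cut_point_range (a b : R) (m : nat) (x : R) : cut_point a b m x -> 0 <= x <= 1.
Proof. intros [H|[H|[H _]]]; lra. Qed.

Lemma inU_bounds (a b : R) : inU a b -> 0 < a < 1 /\ 0 < b <= 1.
Proof. unfold inU; lra. Qed.

Section SkewTent.

Variables a b : R.
Hypothesis Ha : 0 < a < 1.
Hypothesis Hb : 0 < b <= 1.

Lemma skew_tent_Rmin (x : R) :
  skew_tent a b x = Rmin (b / a * x) (b / (1 - a) * (1 - x)).
Proof.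
  unfold skew_tent.
  assert (Hl : b / a * a = b) by (field; lra).
  assert (Hr : b / (1 - a) * (1 - a) = b) by (field; lra).
  assert (0 < b / a) by (apply Rdiv_lt_0_compat; lra).
  assert (0 < b / (1 - a)) by (apply Rdiv_lt_0_compat; lra).
  destruct Rle_dec.
  - rewrite Rmin_left; [reflexivity | nra].
  - rewrite Rmin_right; [reflexivity | nra].
Qed.

Lemma tent_lip_ge1 : 1 <= tent_lip a.
Proof.
  unfold tent_lip.
  assert (1 <= / a) by (rewrite <- Rinv_1; apply Rinv_le_contravar; lra).
  assert (0 < / (1 - a)) by (apply Rinv_0_lt_compat; lra).
  lra.
Qed.

Lemma skew_tent_lipschitz (u v : R) :
  Rabs (skew_tent a b u - skew_tent a b v) <= tent_lip a * Rabs (u - v).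
Proof.
  rewrite !skew_tent_Rmin. eapply Rle_trans; [apply Rabs_Rmin_sub_le|].
  replace (b / a * u - b / a * v) with (b / a * (u - v)) by ring.
  replace (b / (1 - a) * (1 - u) - b / (1 - a) * (1 - v)) with (b / (1 - a) * (v - u))
    by ring.
  rewrite !Rabs_mult, (Rabs_minus_sym v u).
  assert (0 < b / a <= / a).
  { split; [apply Rdiv_lt_0_compat; lra|].
    unfold Rdiv. rewrite <- (Rmult_1_l (/ a)) at 2.
    apply Rmult_le_compat_r; [left; apply Rinv_0_lt_compat|]; lra. }
  assert (0 < b / (1 - a) <= / (1 - a)).
  { split; [apply Rdiv_lt_0_compat; lra|].
    unfold Rdiv. rewrite <- (Rmult_1_l (/ (1 - a))) at 2.
    apply Rmult_le_compat_r; [left; apply Rinv_0_lt_compat|]; lra. }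
  rewrite (Rabs_right (b / a)), (Rabs_right (b / (1 - a))) by lra.
  pose proof (Rabs_pos (u - v)). unfold tent_lip.
  apply Rmax_lub; nra.
Qed.

Lemma Titer_lipschitz (j : nat) (u v : R) :
  Rabs (Titer a b j u - Titer a b j v) <= tent_lip a ^ j * Rabs (u - v).
Proof.
  induction j as [|j IH]; simpl; [lra|].
  eapply Rle_trans; [apply skew_tent_lipschitz|].
  rewrite Rmult_assoc. apply Rmult_le_compat_l; [pose proof tent_lip_ge1; lra | exact IH].
Qed.

Lemma Titer_continuity (j : nat) : continuity (Titer a b j).
Proof.
  apply (lipschitz_continuity _ (tent_lip a ^ j)); [|apply Titer_lipschitz].
  apply pow_lt. pose proof tent_lip_ge1. lra.
Qed.

Lemma skew_tent_zero : skew_tent a b 0 = 0.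
Proof. unfold skew_tent. destruct Rle_dec; [ring | lra]. Qed.

Lemma Titer_zero (j : nat) : Titer a b j 0 = 0.
Proof. induction j as [|j IH]; simpl; [reflexivity | now rewrite IH, skew_tent_zero]. Qed.

Lemma Titer_S_one (j : nat) : Titer a b (S j) 1 = 0.
Proof.
  induction j as [|j IH].
  - simpl. unfold skew_tent. destruct Rle_dec; [lra | ring].
  - change (skew_tent a b (Titer a b (S j) 1) = 0). now rewrite IH, skew_tent_zero.
Qed.

Lemma skew_tent_eq_opposite_sides (u v : R) :
  u <> v -> skew_tent a b u = skew_tent a b v -> (u - a) * (v - a) < 0.
Proof.
  intros Huv E. unfold skew_tent in E.
  assert (Hl : b / a * a = b) by (field; lra).
  assert (Hr : b / (1 - a) * (1 - a) = b) by (field; lra).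
  assert (0 < b / a) by (apply Rdiv_lt_0_compat; lra).
  assert (0 < b / (1 - a)) by (apply Rdiv_lt_0_compat; lra).
  destruct (Rle_dec u a), (Rle_dec v a).
  - exfalso. apply Huv, (Rmult_eq_reg_l (b / a)); lra.
  - destruct (Req_dec u a) as [->|]; [nra | nra].
  - destruct (Req_dec v a) as [->|]; [nra | nra].
  - exfalso. apply Huv, (Rmult_eq_reg_l (b / (1 - a))); lra.
Qed.

(* At the last time the two orbits differ they lie on opposite sides of a,
   and the intermediate value theorem yields the preimage. *)
Lemma Titer_eq_interior_preimage (j : nat) (x y : R) :
  x < y -> Titer a b j x = Titer a b j y ->
  exists l z, (l < j)%nat /\ x < z < y /\ Titer a b l z = a.
Proof.
  intros Hxy. induction j as [|j IH]; simpl; intros E; [lra|].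
  destruct (Req_dec (Titer a b j x) (Titer a b j y)) as [E'|Hne].
  - destruct (IH E') as [l [z [Hl Hz]]]. exists l, z. split; [lia | exact Hz].
  - pose proof (skew_tent_eq_opposite_sides _ _ Hne E) as Hsides.
    destruct (IVT_cor (fun t => Titer a b j t - a) x y) as [z [Hz Ez]].
    + apply continuity_minus; [apply Titer_continuity | apply continuity_const].
      intros ? ?; reflexivity.
    + lra.
    + cbv beta. lra.
    + cbv beta in Ez. exists j, z. split; [lia|].
      destruct (Req_dec z x) as [->|]; [nra|]. destruct (Req_dec z y) as [->|]; [nra|].
      split; lra.
Qed.

Lemma partition_interval_Titer_neq (m j : nat) (x y : R) :
  partition_interval a b m x y -> (j < m)%nat -> Titer a b j x <> Titer a b j y.
Proof.
  intros [Hxy [Cx [Cy Hno]]] Hj E.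
  destruct (Titer_eq_interior_preimage j x y Hxy E) as [l [z [Hl [Hz Ez]]]].
  apply (Hno z Hz). right; right.
  pose proof (cut_point_range _ _ _ _ Cx). pose proof (cut_point_range _ _ _ _ Cy).
  split; [lra|]. exists l. split; [lia | exact Ez].
Qed.

Lemma critical_gap_exists (m : nat) : exists c, 0 < c /\ critical_gap a b m c.
Proof.
  induction m as [|m [c [Hc [Hca [Hca' Hret]]]]].
  - exists (Rmin a (1 - a)). split; [apply Rmin_glb_lt; lra|].
    split; [apply Rmin_l|]. split; [apply Rmin_r|]. intros k Hk. lia.
  - destruct (Req_dec (Titer a b m a) a) as [E|Hne].
    + exists c. split; [exact Hc|]. split; [exact Hca|]. split; [exact Hca'|].
      intros k Hk Nk. destruct (Nat.eq_dec k m) as [->|]; [contradiction|].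
      apply Hret; [lia | exact Nk].
    + set (c' := Rmin c (Rabs (Titer a b m a - a))).
      assert (Hc' : c' <= c) by apply Rmin_l.
      exists c'. split; [apply Rmin_glb_lt; [lra | apply Rabs_pos_lt; lra]|].
      split; [lra|]. split; [lra|].
      intros k Hk Nk. destruct (Nat.eq_dec k m) as [->|]; [apply Rmin_r|].
      eapply Rle_trans; [exact Hc' | apply Hret; [lia | exact Nk]].
Qed.

(* Under T^i', preimages of a of orders i < i' are sent to a return T^(i'-i)(a)
   of the critical point and to a itself. *)
Lemma preimages_separated (m : nat) (c : R) (i i' : nat) (u v : R) :
  critical_gap a b m c -> (i < i' < m)%nat ->
  Titer a b i u = a -> Titer a b i' v = a -> Titer a b i' u <> Titer a b i' v ->
  c <= Rabs (Titer a b i' u - Titer a b i' v).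
Proof.
  intros [_ [_ Hret]] Hii' Hu Hv Hne.
  assert (Hreturn : Titer a b i' u = Titer a b (i' - i) a).
  { transitivity (Titer a b (i' - i + i) u); [f_equal; lia | now rewrite Titer_add, Hu]. }
  rewrite Hreturn, Hv in Hne |- *. apply Hret; [lia | exact Hne].
Qed.

Lemma partition_interval_separated (m : nat) (c x y : R) :
  critical_gap a b m c -> partition_interval a b m x y ->
  exists j, (j <= m)%nat /\ c <= Rabs (Titer a b j x - Titer a b j y).
Proof.
  intros Hgap HP. pose proof HP as [Hxy [Cx [Cy _]]].
  pose proof (cut_point_range _ _ _ _ Cx). pose proof (cut_point_range _ _ _ _ Cy).
  pose proof Hgap as [Hca [Hca' _]].
  destruct Cx as [->|[->|[_ [i [Hi Ex]]]]]; [| lra |];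
    destruct Cy as [->|[->|[_ [i' [Hi' Ey]]]]]; try lra.
  - exists 0%nat. split; [lia|]. simpl. rewrite Rabs_left; lra.
  - exists i'. split; [lia|]. rewrite Titer_zero, Ey, Rabs_left; lra.
  - exists i. split; [lia|]. rewrite Ex. destruct i as [|i].
    + simpl. rewrite Rabs_left; lra.
    + rewrite Titer_S_one, Rabs_right; lra.
  - destruct (Nat.lt_total i i') as [Hlt|[<-|Hgt]].
    + exists i'. split; [lia|]. apply (preimages_separated m c i); try easy.
      now apply (partition_interval_Titer_neq m).
    + exfalso. apply (partition_interval_Titer_neq m i x y HP Hi). congruence.
    + exists i. split; [lia|]. rewrite Rabs_minus_sym.
      apply (preimages_separated m c i'); try easy.
      intros E. now apply (partition_interval_Titer_neq m i x y HP Hi).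
Qed.

Lemma partition_lower_bound_of_gap (m : nat) (c : R) :
  critical_gap a b m c -> partition_lower_bound a b m (c / tent_lip a ^ m).
Proof.
  intros Hgap x y HP.
  destruct (partition_interval_separated m c x y Hgap HP) as [j [Hj Hsep]].
  pose proof tent_lip_ge1 as HL.
  assert (HLm : 0 < tent_lip a ^ m) by (apply pow_lt; lra).
  assert (c <= tent_lip a ^ m * (y - x)).
  { eapply Rle_trans; [exact Hsep|]. eapply Rle_trans; [apply Titer_lipschitz|].
    destruct HP as [Hxy _]. rewrite Rabs_minus_sym, Rabs_right by lra.
    apply Rmult_le_compat_r; [lra | now apply Rle_pow]. }
  apply (Rmult_le_reg_l (tent_lip a ^ m)); [exact HLm|].
  replace (tent_lip a ^ m * (c / tent_lip a ^ m)) with c by (field; lra). lra.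
Qed.

Lemma partition_lower_bound_exists (m : nat) :
  exists d, 0 < d /\ partition_lower_bound a b m d.
Proof.
  destruct (critical_gap_exists m) as [c [Hc Hgap]].
  exists (c / tent_lip a ^ m). split; [|exact (partition_lower_bound_of_gap m c Hgap)].
  apply Rdiv_lt_0_compat; [exact Hc|]. apply pow_lt. pose proof tent_lip_ge1. lra.
Qed.

End SkewTent.

Section ParameterDependence.

Variables (a b : nat -> R) (a0 b0 : R).
Hypothesis Hab : forall n, 0 < a n < 1 /\ 0 < b n <= 1.
Hypothesis Ha0 : 0 < a0 < 1.
Hypothesis Hb0 : 0 < b0 <= 1.
Hypothesis Ha : Un_cv a a0.
Hypothesis Hb : Un_cv b b0.

Lemma one_minus_cv : Un_cv (fun n => 1 - a n) (1 - a0).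
Proof. apply CV_minus; [apply Un_cv_const | exact Ha]. Qed.

Lemma Titer_param_cv (x : nat -> R) (x0 : R) (k : nat) :
  Un_cv x x0 -> Un_cv (fun n => Titer (a n) (b n) k (x n)) (Titer a0 b0 k x0).
Proof.
  intros Hx. induction k as [|k IH]; [exact Hx|]. simpl.
  rewrite skew_tent_Rmin by lra.
  apply (Un_cv_ext (fun n => Rmin (b n / a n * Titer (a n) (b n) k (x n))
                                  (b n / (1 - a n) * (1 - Titer (a n) (b n) k (x n))))).
  { intros n. destruct (Hab n). now rewrite skew_tent_Rmin. }
  assert (Hslope : forall u l, Un_cv u l -> l <> 0 -> Un_cv (fun n => b n / u n) (b0 / l)).
  { intros u l Hu Hl. apply CV_mult; [exact Hb | now apply Un_cv_inv]. }
  apply Un_cv_Rmin; apply CV_mult.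
  - apply Hslope; [exact Ha | lra].
  - exact IH.
  - apply Hslope; [exact one_minus_cv | lra].
  - apply CV_minus; [apply Un_cv_const | exact IH].
Qed.

Lemma tent_lip_cv : Un_cv (fun n => tent_lip (a n)) (tent_lip a0).
Proof.
  apply CV_plus; apply Un_cv_inv; [lra | exact Ha | lra | exact one_minus_cv].
Qed.

Lemma critical_gap_eventually (m : nat) :
  kneading_in_Minf a0 b0 ->
  exists c, 0 < c /\ eventually (fun n => critical_gap (a n) (b n) m c).
Proof.
  intros Hkn. destruct (critical_gap_exists a0 b0 Ha0 m) as [c [Hc [Hca [Hca' Hret]]]].
  exists (c / 2). split; [lra|].
  assert (Hreturns : forall k, (k < m)%nat -> eventually (fun n =>
            Titer (a n) (b n) k (a n) <> a n ->
            c / 2 <= Rabs (Titer (a n) (b n) k (a n) - a n))).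
  { intros [|k] Hk.
    - exists 0%nat. intros n _ Hne. now contradiction Hne.
    - assert (Hgap : c <= Rabs (Titer a0 b0 (S k) a0 - a0)).
      { apply Hret; [exact Hk | apply Hkn; lia]. }
      assert (Hcv : Un_cv (fun n => Rabs (Titer (a n) (b n) (S k) (a n) - a n))
                          (Rabs (Titer a0 b0 (S k) a0 - a0))).
      { apply (continuity_seq Rabs); [apply Rcontinuity_abs|].
        apply CV_minus; [apply Titer_param_cv; exact Ha | exact Ha]. }
      destruct (Un_cv_eventually_gt _ _ (c / 2) Hcv ltac:(lra)) as [N HN].
      exists N. intros n Hn _. apply Rlt_le, HN, Hn. }
  destruct (eventually_and _ _ (Un_cv_eventually_gt _ _ (c / 2) Ha ltac:(lra))
              (eventually_and _ _ (Un_cv_eventually_gt _ _ (c / 2) one_minus_cv ltac:(lra))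
                 (eventually_forall_lt _ m Hreturns))) as [N HN].
  exists N. intros n Hn. destruct (HN n Hn) as [H1 [H2 H3]].
  split; [lra|]. split; [lra | exact H3].
Qed.

Lemma partition_lower_bound_eventually (m : nat) :
  kneading_in_Minf a0 b0 ->
  exists d, 0 < d /\ eventually (fun n => partition_lower_bound (a n) (b n) m d).
Proof.
  intros Hkn. destruct (critical_gap_eventually m Hkn) as [c [Hc Hgap]].
  set (K := tent_lip a0 + 1).
  assert (HK : 1 <= K) by (pose proof (tent_lip_ge1 a0 Ha0); unfold K; lra).
  assert (HKm : 0 < K ^ m) by (apply pow_lt; lra).
  exists (c / K ^ m). split; [apply Rdiv_lt_0_compat; lra|].
  destruct (eventually_and _ _ Hgap
              (Un_cv_eventually_lt _ _ K tent_lip_cv ltac:(unfold K; lra))) as [N HN].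
  exists N. intros n Hn. destruct (HN n Hn) as [Hgapn HLn]. destruct (Hab n).
  apply (partition_lower_bound_le _ _ _ (c / tent_lip (a n) ^ m));
    [| now apply partition_lower_bound_of_gap].
  pose proof (tent_lip_ge1 (a n) ltac:(assumption)).
  unfold Rdiv. apply Rmult_le_compat_l; [lra|].
  apply Rinv_le_contravar; [apply pow_lt; lra|]. apply pow_incr. lra.
Qed.

End ParameterDependence.

Lemma partition_lower_bound_initial (a b : nat -> R) (m N : nat) :
  (forall n, 0 < a n < 1 /\ 0 < b n <= 1) ->
  exists d, 0 < d /\ forall n, (n < N)%nat -> partition_lower_bound (a n) (b n) m d.
Proof.
  intros Hab. induction N as [|N [d [Hd Hlt]]].
  - exists 1. split; [lra | intros n Hn; lia].
  - destruct (Hab N) as [HaN HbN].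
    destruct (partition_lower_bound_exists (a N) (b N) HaN HbN m) as [d' [Hd' HN]].
    exists (Rmin d d'). split; [now apply Rmin_glb_lt|].
    intros n Hn. destruct (Nat.eq_dec n N) as [->|].
    + exact (partition_lower_bound_le _ _ _ _ _ (Rmin_r d d') HN).
    + exact (partition_lower_bound_le _ _ _ _ _ (Rmin_l d d') (Hlt n ltac:(lia))).
Qed.

Theorem lemma3p2 (a b : nat -> R) :
  (forall n, inU (a n) (b n)) ->
  kneading_in_Minf (a 0%nat) (b 0%nat) ->
  Un_cv (fun n => a (S n)) (a 0%nat) ->
  Un_cv (fun n => b (S n)) (b 0%nat) ->
  forall m : nat, (1 <= m)%nat ->
    exists delta : R, delta > 0 /\
      forall (n : nat) (x y : R),
        partition_interval (a n) (b n) m x y -> delta <= y - x.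
Proof.
  (* The bound also holds for m = 0. *)
  intros HU Hkn Ha Hb m _.
  assert (Hab : forall n, 0 < a n < 1 /\ 0 < b n <= 1)
    by (intro n; exact (inU_bounds _ _ (HU n))).
  destruct (Hab 0%nat) as [Ha0 Hb0].
  destruct (partition_lower_bound_eventually (fun n => a (S n)) (fun n => b (S n))
              (a 0%nat) (b 0%nat) (fun n => Hab (S n)) Ha0 Hb0 Ha Hb m Hkn)
    as [d [Hd [N Htail]]].
  destruct (partition_lower_bound_initial a b m (S N) Hab) as [d' [Hd' Hinit]].
  exists (Rmin d d'). split; [now apply Rmin_glb_lt|].
  intros n x y HP. destruct (Nat.lt_ge_cases n (S N)) as [Hn|Hn].
  - exact (partition_lower_bound_le _ _ _ _ _ (Rmin_r d d') (Hinit n Hn) x y HP).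
  - destruct n as [|n]; [lia|].
    exact (partition_lower_bound_le _ _ _ _ _ (Rmin_l d d') (Htail n ltac:(lia)) x y HP).
Qed.
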